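(* For every $\delta>0$, every $k\ge 1$ and every $j\in\omega$ there is $N_0$ such that for every $N\ge N_0$ and every $j$ collections $\mathcal{A}_0,\dots,\mathcal{A}_{j-1}\subseteq\mathcal{P}(N)$, each $k$-large in $N$ and upward closed, there exists $Z\subseteq N$ with $|Z|<(1/k+\delta)N$ and $Z\in\bigcap_{j'<j}\mathcal{A}_{j'}$.
   Context: Identify $N$ with $\{0,\dots,N-1\}$. A collection $\mathcal{A}\subseteq\mathcal{P}(N)$ is $k$-large in $N$ if for every partition of $N$ into $k$ pieces $N_0,\dots,N_{k-1}$ there is $i<k$ with $N_i\in\mathcal{A}$. $\mathcal{A}$ is upward closed if $B\in\mathcal{A}$ and $B\subseteq A\subseteq N$ imply $A\in\mathcal{A}$. *)

From HB Require Import structures.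
From mathcomp Require Import all_boot all_order all_algebra.
From mathcomp Require Import reals.
Set Implicit Arguments. Unset Strict Implicit. Unset Printing Implicit Defensive.

(* A partition of N into k pieces N_0,...,N_{k-1} is given by a colouring
   c : 'I_N -> 'I_k, with N_i = [set x | c x == i] (pieces may be empty). *)

Definition k_large (N k : nat) (A : {set {set 'I_N}}) : Prop :=
  forall c : {ffun 'I_N -> 'I_k}, exists i : 'I_k, [set x | c x == i] \in A.

Definition upward_closed (N : nat) (A : {set {set 'I_N}}) : Prop :=
  forall B C : {set 'I_N}, B \in A -> B \subset C -> C \in A.

(* Colour N uniformly at random with k colours and let Z be the class of a
   fixed colour.  By symmetry between the colours and k-largeness, Z lies in
   each A_i with probability at least 1/k; as A_i is upward closed these events
   are increasing, so by the Harris-Kleitman inequality Z lies in all of them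
   with probability at least k^-j.  The size of Z has variance N(k-1)/k^2, so by
   Chebyshev's inequality |Z| >= (1/k + delta) N has probability at most
   (k-1)/(k^2 delta^2 N), which is below k^-j once N is large.  Colourings are
   words of length N over 'I_k, and probabilities are replaced by the counts
   [sum_words]. *)

From HB Require Import structures.
From mathcomp Require Import all_boot all_order all_algebra.
From mathcomp Require Import perm reals.
From mathcomp Require Import ring lra.
Import Order.TTheory GRing.Theory Num.Theory.
Set Implicit Arguments. Unset Strict Implicit. Unset Printing Implicit Defensive.
Local Open Scope ring_scope.

Lemma chebyshev_sum (R : realDomainType) (I : finType) (A B : I -> R) :
  (forall a b, 0 <= (A a - A b) * (B a - B b)) ->
  (\sum_a A a) * (\sum_a B a) <= #|I|%:R * \sum_a A a * B a.
Proof.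
move=> AB_sorted.
have : 0 <= \sum_a \sum_b (A a - A b) * (B a - B b).
  by apply: sumr_ge0 => a _; apply: sumr_ge0.
have -> : \sum_a \sum_b (A a - A b) * (B a - B b) =
    \sum_a \sum_b (A a * B a + A b * B b) -
    \sum_a \sum_b (A a * B b + A b * B a).
  rewrite -sumrB; apply: eq_bigr => a _; rewrite -sumrB.
  by apply: eq_bigr => b _; ring.
have diag : \sum_(a : I) \sum_(b : I) A a * B a = #|I|%:R * \sum_a A a * B a.
  by rewrite mulr_sumr; apply: eq_bigr => a _; rewrite sumr_const mulr_natl.
rewrite !(eq_bigr _ (fun a _ => big_split _ _ _ _ _)) !big_split /=.
rewrite [X in _ + X - _]exchange_big [X in _ - (_ + X)]exchange_big /=.
rewrite diag big_distrlr /=; lra.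
Qed.

Section Words.
Variables (R : realDomainType) (T : finType).
Local Notation k := (#|T|%:R : R).

Fixpoint sum_words (n : nat) (f : seq T -> R) : R :=
  if n is n'.+1 then \sum_a sum_words n' (fun t => f (a :: t)) else f [::].

Lemma eq_sum_words n f g :
  (forall t, size t = n -> f t = g t) -> sum_words n f = sum_words n g.
Proof.
elim: n f g => [|n IHn] f g fg /=; first exact: fg.
by apply: eq_bigr => a _; apply: IHn => t t_n; apply: fg; rewrite /= t_n.
Qed.

Lemma ler_sum_words n f g :
  (forall t, size t = n -> f t <= g t) -> sum_words n f <= sum_words n g.
Proof.
elim: n f g => [|n IHn] f g fg /=; first exact: fg.
by apply: ler_sum => a _; apply: IHn => t t_n; apply: fg; rewrite /= t_n.
Qed.

Lemma sum_wordsD n f g :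
  sum_words n (fun t => f t + g t) = sum_words n f + sum_words n g.
Proof.
elim: n f g => [|n IHn] f g //=.
by rewrite -big_split; apply: eq_bigr => a _; rewrite IHn.
Qed.

Lemma sum_wordsZ n c f : sum_words n (fun t => c * f t) = c * sum_words n f.
Proof.
elim: n f => [|n IHn] f //=.
by rewrite mulr_sumr; apply: eq_bigr => a _; rewrite IHn.
Qed.

Lemma sum_words_const n c : sum_words n (fun=> c) = k ^+ n * c.
Proof.
elim: n => [|n IHn] /=; first by rewrite mul1r.
by rewrite (eq_bigr _ (fun a _ => IHn)) sumr_const exprS -mulrA mulr_natl.
Qed.

Lemma exchange_sum_words n (J : finType) (F : J -> seq T -> R) :
  sum_words n (fun t => \sum_i F i t) = \sum_i sum_words n (F i).
Proof.
elim: n F => [|n IHn] F //=.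
by rewrite exchange_big; apply: eq_bigr => a _; apply: IHn.
Qed.

Lemma sum_words_perm n (s : {perm T}) f :
  sum_words n (fun t => f (map s t)) = sum_words n f.
Proof.
elim: n f => [|n IHn] f //=.
rewrite [RHS](reindex_inj (@perm_inj _ s)) /=.
by apply: eq_bigr => a _; apply: (IHn (fun t => f (s a :: t))).
Qed.

Lemma sum_words_ge0 n f : (forall t, 0 <= f t) -> 0 <= sum_words n f.
Proof.
move=> f_ge0; rewrite -(mulr0 (k ^+ n)) -sum_words_const.
by apply: ler_sum_words.
Qed.

Lemma sum_words_gt0 n f :
  0 < sum_words n f -> exists2 t, size t = n & 0 < f t.
Proof.
elim: n f => [|n IHn] f /=; first by exists [::].
have [/existsP[a /IHn[t <- ft_gt0]] _ | /existsPn f_le0] :=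
  boolP [exists a, 0 < sum_words n (fun t => f (a :: t))].
  by exists (a :: t).
by rewrite ltNge sumr_le0 // => a _; rewrite leNgt f_le0.
Qed.

Lemma sum_words_lt_exists n (p q : pred (seq T)) :
  sum_words n (fun t => (q t)%:R) < sum_words n (fun t => (p t)%:R) ->
  exists2 t, size t = n & p t && ~~ q t.
Proof.
move=> q_lt_p.
have p_le : sum_words n (fun t => (p t)%:R) <=
    sum_words n (fun t => (q t)%:R) + sum_words n (fun t => (p t && ~~ q t)%:R).
  rewrite -sum_wordsD; apply: ler_sum_words => t _.
  by case: (p t); case: (q t) => /=; lra.
have witness_gt0 : 0 < sum_words n (fun t => (p t && ~~ q t)%:R) by lra.
have [t t_n] := sum_words_gt0 witness_gt0.
by rewrite ltr0n lt0b; exists t.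
Qed.

End Words.

Section Harris.
Variables (R : realDomainType) (T : finType) (a0 : T).
Local Notation k := (#|T|%:R : R).

Definition increasing_in (f : seq T -> R) := forall t t',
  (forall i, nth a0 t i == a0 -> nth a0 t' i == a0) -> f t <= f t'.

Lemma increasing_in_cons f a :
  increasing_in f -> increasing_in (fun t => f (a :: t)).
Proof. by move=> f_incr t t' tt'; apply: f_incr => -[|i] //=; apply: tt'. Qed.

Lemma increasing_in_head f a b t :
  increasing_in f -> (a == a0 -> b == a0) -> f (a :: t) <= f (b :: t).
Proof. by move=> f_incr ab; apply: f_incr => -[|i]. Qed.

Lemma harris_kleitman n f g : increasing_in f -> increasing_in g ->
  sum_words n f * sum_words n g <= k ^+ n * sum_words n (fun t => f t * g t).
Proof.
elim: n f g => [|n IHn] f g f_incr g_incr /=; first by rewrite mul1r.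
apply: le_trans (chebyshev_sum _) _.
  move=> a b.
  have [ba|ab] : (b == a0 -> a == a0) \/ (a == a0 -> b == a0).
    by case: (a == a0); case: (b == a0); [left|left|right|left].
  - by apply: mulr_ge0; rewrite subr_ge0; apply: ler_sum_words => t _;
      apply: increasing_in_head.
  - by apply: mulr_le0; rewrite subr_le0; apply: ler_sum_words => t _;
      apply: increasing_in_head.
rewrite exprS -mulrA ler_wpM2l // mulr_sumr.
by apply: ler_sum => a _; apply: IHn; apply: increasing_in_cons.
Qed.

Lemma increasing_in_all (J : eqType) (P : J -> pred (seq T)) (s : seq J) :
  (forall i, increasing_in (fun t => (P i t)%:R)) ->
  increasing_in (fun t => (all (P^~ t) s)%:R).
Proof.
move=> P_incr t t' tt'.
have [/allP Pt|_] := boolP (all (P^~ t) s); last exact: ler0n.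
suff -> : all (P^~ t') s by [].
apply/allP => i /Pt Pit; have := P_incr i t t' tt'.
by rewrite Pit ler_nat; case: (P i t').
Qed.

Lemma harris_kleitman_all n (J : eqType) (P : J -> pred (seq T)) (s : seq J) :
  (forall i, increasing_in (fun t => (P i t)%:R)) ->
  (\prod_(i <- s) sum_words n (fun t => (P i t)%:R)) * k ^+ n <=
    (k ^+ n) ^+ size s * sum_words n (fun t => (all (P^~ t) s)%:R).
Proof.
move=> P_incr; elim: s => [|i s IHs].
  by rewrite big_nil sum_words_const !mul1r mulr1.
rewrite big_cons -mulrA exprSr -mulrA.
apply: le_trans (_ : _ <= sum_words n (fun t => (P i t)%:R) *
  ((k ^+ n) ^+ size s * sum_words n (fun t => (all (P^~ t) s)%:R))) _.
  by apply: ler_wpM2l IHs; apply: sum_words_ge0.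
rewrite mulrCA; apply: ler_wpM2l; first exact/exprn_ge0/exprn_ge0.
have -> : sum_words n (fun t => (all (P^~ t) (i :: s))%:R : R) =
    sum_words n (fun t => (P i t)%:R * (all (P^~ t) s)%:R).
  by apply: eq_sum_words => t _; rewrite -natrM mulnb.
exact (harris_kleitman n (P_incr i) (increasing_in_all s P_incr)).
Qed.

End Harris.

Section Deviation.
Variables (R : realDomainType) (T : finType) (a0 : T).
Local Notation k := (#|T|%:R : R).

Definition deviation (t : seq T) : R := k * (count_mem a0 t)%:R - (size t)%:R.

Lemma sum_indicator : \sum_(a : T) ((a == a0)%:R : R) = 1.
Proof. by rewrite (bigD1 a0) //= eqxx big1 ?addr0 // => a /negbTE->. Qed.

Lemma sum_words_deviation_sq n :
  sum_words n (fun t => deviation t ^+ 2) = n%:R * (k - 1) * k ^+ n.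
Proof.
elim: n => [|n IHn] /=.
  by rewrite /deviation /= mulr0 subr0 expr0n !mul0r.
pose c a := k * (a == a0)%:R - 1.
have sum_c : \sum_a c a = 0.
  by rewrite sumrB -mulr_sumr sum_indicator sumr_const mulr1 subrr.
have sum_c2 : \sum_a c a ^+ 2 = k * (k - 1).
  rewrite (eq_bigr (fun a => (k ^+ 2 - 2 * k) * (a == a0)%:R + 1)) => [|a _].
    by rewrite big_split /= -mulr_sumr sum_indicator sumr_const; ring.
  by rewrite /c; case: (a == a0) => /=; ring.
set V := sum_words n _ in IHn *; set X := sum_words n deviation.
have sum_cons a : sum_words n (fun t => deviation (a :: t) ^+ 2) =
    k ^+ n * c a ^+ 2 + c a * (2 * X) + V.
  rewrite -sum_words_const -sum_wordsZ -!sum_wordsZ -!sum_wordsD.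
  by apply: eq_sum_words => t _; rewrite /deviation /c /= natrD; ring.
rewrite (eq_bigr _ (fun a _ => sum_cons a)) !big_split /= -!mulr_suml.
have sum_V : \sum_(a : T) V = k * V by rewrite sumr_const mulr_natl.
rewrite -mulr_sumr sum_c2 sum_c sum_V IHn mul0r addr0.
by rewrite exprS -addn1 natrD; ring.
Qed.

Lemma sum_words_count_ge n (x : R) : n%:R <= k * x ->
  sum_words n (fun t => (x <= (count_mem a0 t)%:R)%R%:R) * (k * x - n%:R) ^+ 2
    <= n%:R * (k - 1) * k ^+ n.
Proof.
move=> n_le_kx; rewrite -sum_words_deviation_sq mulrC -sum_wordsZ.
apply: ler_sum_words => t t_n; rewrite /deviation t_n.
have [x_le_count|_] := boolP (x <= _); last by rewrite mulr0 sqr_ge0.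
have kx_le : k * x <= k * (count_mem a0 t)%:R by rewrite ler_wpM2l.
by rewrite mulr1 !expr2 ler_pM ?subr_ge0 ?lerD2r.
Qed.

End Deviation.

Section CountTail.
Variables (R : realFieldType) (T : finType) (a0 : T).
Local Notation k := (#|T|%:R : R).

Lemma sum_words_count_above_mean n (delta : R) : 0 < delta ->
  sum_words n (fun t => ((k^-1 + delta) * n%:R <= (count_mem a0 t)%:R)%R%:R) *
    (k ^+ 2 * delta ^+ 2 * n%:R ^+ 2) <= n%:R * (k - 1) * k ^+ n.
Proof.
move=> delta_gt0.
have k_gt0 : 0 < k by rewrite ltr0n; apply/card_gt0P; exists a0.
have := sum_words_count_ge a0 (n := n) (x := (k^-1 + delta) * n%:R).
have -> : k * ((k^-1 + delta) * n%:R) = k * delta * n%:R + n%:R.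
  by rewrite mulrA mulrDr mulfV ?gt_eqF // mulrDl mul1r addrC.
rewrite addrK -!exprMn; apply; rewrite lerDr.
by rewrite !mulr_ge0 // ltW.
Qed.

End CountTail.

Section LargeFamilies.
Variables (R : realDomainType) (N k : nat) (a0 : 'I_k).

Definition colour_class (t : seq 'I_k) (a : 'I_k) : {set 'I_N} :=
  [set x : 'I_N | nth a0 t x == a].

Lemma card_colour_class t a : size t = N -> #|colour_class t a| = count_mem a t.
Proof.
move=> t_N; rewrite -sum1_count (big_nth a0) t_N big_mkord cardsE -sum1_card.
by apply: eq_bigl => x.
Qed.

Lemma colour_class_perm (s : {perm 'I_k}) t a :
  size t = N -> colour_class (map s t) (s a) = colour_class t a.
Proof.
move=> t_N; apply/setP => x.
by rewrite !inE (nth_map a0) ?t_N // (inj_eq perm_inj).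
Qed.

Lemma increasing_in_colour_class (A : {set {set 'I_N}}) : upward_closed A ->
  increasing_in a0 (fun t => (colour_class t a0 \in A)%:R : R).
Proof.
move=> A_up t t' tt'; have [/A_up A_t'|] := boolP (colour_class t a0 \in A).
  by rewrite A_t' //; apply/subsetP => x; rewrite !inE; apply: tt'.
by rewrite ler0n.
Qed.

Lemma large_sum_words (A : {set {set 'I_N}}) : k_large k A -> upward_closed A ->
  k%:R ^+ N <= k%:R * sum_words N (fun t => (colour_class t a0 \in A)%:R : R).
Proof.
move=> A_large A_up.
have class_sym a : sum_words N (fun t => (colour_class t a \in A)%:R : R) =
    sum_words N (fun t => (colour_class t a0 \in A)%:R).
  rewrite -(sum_words_perm N (tperm a a0)
    (fun t => (colour_class t a0 \in A)%:R)).
  apply: eq_sum_words => t t_N.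
  by rewrite -(colour_class_perm (tperm a a0)) // tpermL.
have some_class_in t :
    size t = N -> 1 <= \sum_a ((colour_class t a \in A)%:R : R).
  move=> _; have [a a_in] := A_large [ffun x : 'I_N => nth a0 t x].
  have class_in : colour_class t a \in A.
    suff -> : colour_class t a = [set x | [ffun x : 'I_N => nth a0 t x] x == a].
      by [].
    by apply/setP => x; rewrite !inE ffunE.
  by rewrite (bigD1 a) //= class_in lerDl sumr_ge0.
have := ler_sum_words some_class_in.
rewrite sum_words_const exchange_sum_words (eq_bigr _ (fun a _ => class_sym a)).
by rewrite sumr_const card_ord mulr1 mulr_natl.
Qed.

Lemma all_large_sum_words (J : eqType) (A : J -> {set {set 'I_N}}) (s : seq J) :
  (forall i, k_large k (A i) /\ upward_closed (A i)) ->
  k%:R ^+ N <= k%:R ^+ size s *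
    sum_words N (fun t => (all (fun i => colour_class t a0 \in A i) s)%:R : R).
Proof.
move=> A_good.
have kN_gt0 : 0 < k%:R ^+ N :> R.
  by rewrite exprn_gt0 // ltr0n (leq_trans _ (ltn_ord a0)).
have harris := harris_kleitman_all N
  (P := fun i t => colour_class t a0 \in A i) s
  (fun i => increasing_in_colour_class (A_good i).2).
rewrite card_ord in harris.
set Sall := sum_words N _ in harris *.
set P := \prod_(i <- s) _ in harris.
have const_prod (x : R) : \prod_(i <- s) x = x ^+ size s.
  by rewrite big_const_seq count_predT iter_mulr_1.
have prod_ge : (k%:R ^+ N) ^+ size s <= k%:R ^+ size s * P.
  rewrite -!const_prod -big_split /=.
  apply: ler_prod => i _; have [A_large A_up] := A_good i.
  by rewrite exprn_ge0 ?ler0n //= large_sum_words.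
rewrite -(ler_pM2l (exprn_gt0 (size s) kN_gt0)) mulrCA.
apply: le_trans (ler_wpM2l (exprn_ge0 _ (ler0n _ _)) harris).
by rewrite mulrA ler_wpM2r // ltW.
Qed.

End LargeFamilies.

Lemma eventually_lt_mulrn (R : archiRealFieldType) (c x : R) :
  0 < c -> exists N0, forall N, (N0 <= N)%N -> x < c * N%:R.
Proof.
move=> c_gt0; exists (Num.Def.archi_bound `|c^-1 * x|) => N N0_le_N.
rewrite -ltr_pdivrMl // (le_lt_trans (ler_norm _)) //.
by rewrite (lt_le_trans (archi_boundP (normr_ge0 _))) // ler_nat.
Qed.

Lemma lt_of_moment_bounds (R : realFieldType) (K Kj KN e N b g : R) :
  1 <= K -> 0 < Kj -> 0 < KN -> 0 < N -> KN <= Kj * g -> Kj < e * N ->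
  b * (K ^+ 2 * e * N ^+ 2) <= N * (K - 1) * KN -> b < g.
Proof.
move=> K_ge1 Kj_gt0 KN_gt0 N_gt0 KN_le Kj_lt b_le.
have g_gt0 : 0 < g by rewrite -(pmulr_rgt0 _ Kj_gt0) (lt_le_trans KN_gt0).
have Kj_small : (K - 1) * Kj < K ^+ 2 * (e * N).
  apply: le_lt_trans (_ : _ <= K ^+ 2 * Kj) _; last by rewrite ltr_pM2l //; nra.
  by rewrite ler_wpM2r ?ltW //; nra.
have : b * (K ^+ 2 * e * N ^+ 2) < g * (K ^+ 2 * e * N ^+ 2).
  apply: (le_lt_trans b_le).
  apply: (le_lt_trans (_ : _ <= N * (K - 1) * (Kj * g))).
    by apply: ler_wpM2l KN_le; apply: mulr_ge0; [exact: ltW | rewrite subr_ge0].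
  have -> : N * (K - 1) * (Kj * g) = (N * g) * ((K - 1) * Kj) by ring.
  have -> : g * (K ^+ 2 * e * N ^+ 2) = (N * g) * (K ^+ 2 * (e * N)) by ring.
  by rewrite ltr_pM2l ?mulr_gt0.
have e_gt0 : 0 < e by rewrite -(pmulr_lgt0 _ N_gt0) (lt_trans Kj_gt0).
have K_gt0 := lt_le_trans ltr01 K_ge1.
by rewrite ltr_pM2r // !(mulr_gt0, exprn_gt0).
Qed.

Local Close Scope ring_scope.

Theorem corollary2p10 (R : realType) (delta : R) (k j : nat) :
  (0 < delta)%R -> 1 <= k ->
  exists N0 : nat, forall N : nat, N0 <= N ->
    forall A : 'I_j -> {set {set 'I_N}},
      (forall j' : 'I_j, k_large k (A j') /\ upward_closed (A j')) ->
      exists Z : {set 'I_N},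
        ((#|Z|%:R : R) < ((k%:R)^-1 + delta) * N%:R)%R /\
        (forall j' : 'I_j, Z \in A j').
Proof.
Local Open Scope ring_scope.
move=> delta_gt0; case: k => [//|p] _; set K : R := p.+1%:R.
have K_ge1 : 1 <= K by rewrite ler1n.
have [N0 N0_large] := eventually_lt_mulrn (K ^+ j) (exprn_gt0 2 delta_gt0).
exists N0.+1 => N N0_lt_N A A_good.
pose good (t : seq 'I_p.+1) :=
  all (fun i => colour_class N ord0 t ord0 \in A i) (enum 'I_j).
pose big (t : seq 'I_p.+1) := (K^-1 + delta) * N%:R <= (count_mem ord0 t)%:R.
have [t t_N /andP[t_good t_small]] : exists2 t, size t = N & good t && ~~ big t.
  apply: sum_words_lt_exists.
  have good_ge := all_large_sum_words R (@ord0 p) (enum 'I_j) A_good.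
  rewrite size_enum_ord in good_ge.
  have N_gt0 : 0 < N%:R :> R by rewrite ltr0n (leq_trans _ N0_lt_N).
  have K_gt0 : 0 < K := lt_le_trans ltr01 K_ge1.
  have := sum_words_count_above_mean (@ord0 p) N delta_gt0.
  rewrite card_ord -/K => big_le.
  exact: lt_of_moment_bounds K_ge1 (exprn_gt0 _ K_gt0) (exprn_gt0 _ K_gt0) N_gt0
    good_ge (N0_large N (ltnW N0_lt_N)) big_le.
exists (colour_class N ord0 t ord0); split.
  by rewrite card_colour_class // ltNge.
by move=> i; apply: (allP t_good); rewrite mem_enum.
Qed.
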